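(* Let $X$ be a finite nonempty set and put $p=2|X|-1$. Let $t,k\geq 0$ be integers and let $g\in\mathrm{FG}(X)$ have reduced length $t$. Then the number of elements $(T,g)\in \mathrm{FIM}(X)$ (with this fixed $g$) having exactly $k$ branch edges equals $R_{p,q}(k)$, where $q=2p+(t-1)(p-1)$.
   Context: $\mathrm{FG}(X)$ is the free group on $X$. $\Gamma_X$ is the Cayley graph of $\mathrm{FG}(X)$ with respect to $X$: its vertices are the elements of $\mathrm{FG}(X)$, with an edge from $h$ to $hx$ for each $h$ and each $x\in X$. Elements of the free inverse monoid $\mathrm{FIM}(X)$ are identified (Munn's model) with pairs $(T,g)$, where $T$ is a finite connected subgraph of $\Gamma_X$ containing the vertex $1$ and $g$ is a vertex of $T$. The trunk of $(T,g)$ is the unique geodesic in $T$ from $1$ to $g$. Branch edges are the edges of $T$ not on the trunk. The Fuss–Catalan number is $R_{p,q}(k)=\frac{q}{kp+q}\binom{kp+q}{k}$. *)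

From HB Require Import structures.
From mathcomp Require Import all_boot all_order all_algebra.
From mathcomp Require Import finmap.
Set Implicit Arguments. Unset Strict Implicit. Unset Printing Implicit Defensive.
Import Order.TTheory GRing.Theory Num.Theory.
Local Open Scope fset_scope.

(* Words over X^{+-1}: a letter (x, false) is x, (x, true) is x^{-1}. *)
Definition letter (X : finType) := (X * bool)%type.

(* Freely reduced words: no adjacent x x^{-1} or x^{-1} x.
   Elements of FG(X) are identified with reduced words; 1 = [::]. *)
Definition reduced (X : finType) (w : seq (letter X)) : bool :=
  ~~ has (fun ab : letter X * letter X =>
            (ab.1.1 == ab.2.1) && (ab.1.2 != ab.2.2)) (zip w (behead w)).

Definition rmul (X : finType) (w : seq (letter X)) (l : letter X) : seq (letter X) :=
  match rev w with
  | l' :: r => if (l'.1 == l.1) && (l'.2 != l.2) then rev r else rcons w l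
  | [::] => [:: l]
  end.

Definition mulx (X : finType) (h : seq (letter X)) (x : X) := rmul h (x, false).

(* Edges of the Cayley graph Gamma_X: the edge from h to h x is encoded (h, x). *)
Definition cedge (X : finType) := (seq (letter X) * X)%type.

Definition subgraph (X : finType) :=
  ({fset seq (letter X)} * {fset cedge X})%type.

Definition joins (X : finType) (e : cedge X) (u v : seq (letter X)) : bool :=
  ((u == e.1) && (v == mulx e.1 e.2)) || ((v == e.1) && (u == mulx e.1 e.2)).

Definition adj (X : finType) (E : {fset cedge X}) : rel (seq (letter X)) :=
  fun u v => has (fun e => joins e u v) E.

(* A walk in E from 1 to v: vertex sequence 1 :: p. *)
Definition walk (X : finType) (E : {fset cedge X}) (v : seq (letter X))
  (p : seq (seq (letter X))) : bool :=
  path (adj E) [::] p && (last [::] p == v).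

Definition is_fin_conn_subgraph (X : finType) (T : subgraph X) : Prop :=
  [/\ (forall v, v \in T.1 -> reduced v),
      (forall e, e \in T.2 -> (e.1 \in T.1) && (mulx e.1 e.2 \in T.1)),
      [::] \in T.1
    & (forall v, v \in T.1 -> exists p, walk T.2 v p)].

(* (T, g) is an element of FIM(X) (Munn's model). *)
Definition munn_elt (X : finType) (T : subgraph X) (g : seq (letter X)) : Prop :=
  is_fin_conn_subgraph T /\ g \in T.1.

Definition geodesic (X : finType) (T : subgraph X) (g : seq (letter X))
  (p : seq (seq (letter X))) : Prop :=
  walk T.2 g p /\ (forall p', walk T.2 g p' -> size p <= size p').

Definition on_walk (X : finType) (e : cedge X) (p : seq (seq (letter X))) : bool :=
  has (fun uv => joins e uv.1 uv.2) (zip ([::] :: p) p).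

Definition trunk_edge (X : finType) (T : subgraph X) (g : seq (letter X))
  (e : cedge X) : Prop :=
  exists p, geodesic T g p /\ on_walk e p.

Definition n_branch_edges (X : finType) (T : subgraph X) (g : seq (letter X))
  (k : nat) : Prop :=
  exists B : {fset cedge X},
    #|` B| = k /\ (forall e, e \in B <-> (e \in T.2 /\ ~ trunk_edge T g e)).

Definition fuss_catalan (p q k : nat) : rat :=
  (q%:R / (k * p + q)%:R * 'C(k * p + q, k)%:R)%R.

From HB Require Import structures.
From mathcomp Require Import all_boot all_order all_algebra.
From mathcomp Require Import finmap.
From mathcomp Require Import ring zify.
Import Order.TTheory GRing.Theory Num.Theory.
Set Implicit Arguments. Unset Strict Implicit. Unset Printing Implicit Defensive.
Local Open Scope fset_scope.

(* A Munn tree (T, g) is determined by its vertex set: the vertices of a finite connected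
   subgraph of the Cayley graph containing 1 are closed under taking the parent (drop the
   last letter), and its edges are exactly those joining each vertex w <> 1 to its parent.
   The geodesic from 1 to g runs through the prefixes of g, so the branch edges correspond
   to the vertices off the trunk.  These form a forest hanging from the q "slots": the t + 1
   trunk vertices have 2|X| + t p children, t of which lie on the trunk, leaving
   q = 2p + (t - 1)(p - 1) of them; and every vertex of the forest has p = 2|X| - 1
   children.  Counting k-vertex forests by whether the first slot is used (and then
   replaced by its p children) gives F(k+1, q+1) = F(k+1, q) + F(k, q + p), the
   recurrence of the Fuss-Catalan numbers. *)

Lemma prefix_rconsE (T : eqType) (v w : seq T) x :
  prefix v (rcons w x) = prefix v w || (v == rcons w x).
Proof. by elim: w v => [|a w IH] [|b v] //=; rewrite IH eqseq_cons andb_orr. Qed.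

Lemma rcons_neq0 (T : eqType) (s : seq T) x : rcons s x != [::].
Proof. by case: s. Qed.

Lemma zip_cons_rcons (T : Type) (a x : T) s :
  zip (a :: rcons s x) (rcons s x) = rcons (zip (a :: s) s) (last a s, x).
Proof. by elim: s a => [|b s IH] a //=; rewrite IH. Qed.

Lemma path_crossing (T : Type) (e : rel T) (P : pred T) x s :
  path e x s -> ~~ P x -> P (last x s) -> exists a b, [/\ e a b, ~~ P a & P b].
Proof.
elim: s x => [|y s IH] x /=; first by move=> _ /negPf ->.
case/andP=> exy es nPx; have [Py _|nPy] := boolP (P y); first by exists x, y.
exact: IH.
Qed.

(** * Fuss-Catalan numbers *)

Section FussCatalan.
Local Open Scope ring_scope.

Lemma fuss_catalan_k0 p q : (0 < q)%N -> fuss_catalan p q 0 = 1.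
Proof.
by move=> q0; rewrite /fuss_catalan bin0 mul0n add0n mulr1 divff // pnatr_eq0 -lt0n.
Qed.

Lemma fuss_catalan_q0 p k : fuss_catalan p 0 k = 0.
Proof. by rewrite /fuss_catalan !mul0r. Qed.

Lemma fuss_catalanS p q k : (0 < p)%N ->
  fuss_catalan p q.+1 k.+1 = fuss_catalan p q k.+1 + fuss_catalan p (p + q) k.
Proof.
move=> p0; rewrite /fuss_catalan.
set n := (k.+1 * p + q)%N.
have -> : (k.+1 * p + q.+1 = n.+1)%N by rewrite addnS.
have -> : (k * p + (p + q) = n)%N by rewrite /n mulSn addnCA addnA.
have kn : (k <= n)%N by rewrite /n; nia.
have n0 : n%:R != 0 :> rat by rewrite pnatr_eq0 /n; nia.
have k1 : k.+1%:R != 0 :> rat by rewrite pnatr_eq0.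
have binS : 'C(n.+1, k.+1)%:R = n.+1%:R / k.+1%:R * 'C(n, k)%:R :> rat.
  by apply: (mulfI k1); rewrite -natrM -mul_bin_diag natrM /=; field; rewrite addrC natr1.
have binr : 'C(n, k.+1)%:R = (n - k)%:R / k.+1%:R * 'C(n, k)%:R :> rat.
  by apply: (mulfI k1); rewrite -natrM mul_bin_left natrM; field; rewrite addrC natr1.
have nE : n%:R = (k%:R + 1) * p%:R + q%:R :> rat by rewrite natr1 -natrM -natrD.
have n1 : n%:R + 1 != 0 :> rat by rewrite natr1 pnatr_eq0.
rewrite binS binr natrB // -!natr1 natrD; move: ('C(n, k)%:R : rat) => c.
by rewrite nE in n0 n1 *; field; rewrite n0 n1 natr1 k1.
Qed.

End FussCatalan.

(** * Reduced words and walks in the Cayley graph *)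

Section Words.
Variable X : finType.
Local Notation word := (seq (letter X)).

Definition cancels (a b : letter X) := (a.1 == b.1) && (a.2 != b.2).

Lemma reducedE (w : word) : reduced w = sorted (fun a b => ~~ cancels a b) w.
Proof.
rewrite /reduced; case: w => [|a s] //=.
by elim: s a => [|b s IH] a //=; rewrite negb_or IH.
Qed.

Lemma reduced_rcons2 (r : word) a b :
  reduced (rcons (rcons r a) b) = reduced (rcons r a) && ~~ cancels a b.
Proof.
rewrite !reducedE; case: r => [|c r] /=; first by rewrite andbT.
by rewrite rcons_path last_rcons.
Qed.

Lemma reduced_prefix (v w : word) : prefix v w -> reduced w -> reduced v.
Proof. by rewrite prefixE !reducedE => /eqP <-; apply: take_sorted. Qed.

Definition parent (w : word) := take (size w).-1 w.

Lemma parent_rcons (r : word) a : parent (rcons r a) = r.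
Proof. by rewrite /parent size_rcons -cats1 take_size_cat. Qed.

Lemma rmul_rcons (r : word) a b :
  rmul (rcons r a) b = if cancels a b then r else rcons (rcons r a) b.
Proof. by rewrite /rmul rev_rcons revK. Qed.

Lemma rmulP (w : word) l : rmul w l = rcons w l \/ exists a, w = rcons (rmul w l) a.
Proof.
case/lastP: w => [|r a]; first by left.
by rewrite rmul_rcons; case: ifP => _; [right; exists a | left].
Qed.

Lemma adj_rcons E (u v : word) :
  adj E u v -> (exists l, v = rcons u l) \/ (exists l, u = rcons v l).
Proof.
case/hasP=> -[h x] _ /orP[] /andP[/eqP-> /eqP->]; rewrite /mulx /=.
  by case: (rmulP h (x, false)) => [->|]; [left; exists (x, false) | right].
by case: (rmulP h (x, false)) => [->|]; [right; exists (x, false) | left].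
Qed.

Lemma adj_size E (u v : word) : adj E u v -> size v <= (size u).+1.
Proof. by case/adj_rcons=> -[l ->]; rewrite size_rcons // -addn2 leq_addr. Qed.

Lemma adj_parent E (u v : word) :
  adj E u v -> size v = (size u).+1 -> exists l, v = rcons u l.
Proof. by case/adj_rcons=> -[l ->]; [exists l | rewrite size_rcons; lia]. Qed.

Lemma adj_enter_prefix E (u v w : word) :
  adj E u v -> ~~ prefix w u -> prefix w v -> v = w /\ exists l, w = rcons u l.
Proof.
case/adj_rcons=> -[l ->] nwu.
  by rewrite prefix_rconsE (negPf nwu) => /eqP->; split; last exists l.
by move=> /prefix_trans/(_ (prefix_rcons v l)); rewrite (negPf nwu).
Qed.

Lemma walk_size E (a : word) p : path (adj E) a p -> size (last a p) <= size a + size p.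
Proof.
elim: p a => [|b p IH] a /=; first by rewrite addn0.
by case/andP=> /adj_size ab /IH bp; rewrite addnS -addSn (leq_trans bp) ?leq_add2r.
Qed.

Definition prefix_walk (v : word) := [seq take i v | i <- iota 1 (size v)].

Lemma prefix_walk_rcons (r : word) a :
  prefix_walk (rcons r a) = rcons (prefix_walk r) (rcons r a).
Proof.
rewrite /prefix_walk size_rcons -[(size r).+1]addn1 iotaD map_cat cats1 add1n.
rewrite take_oversize ?size_rcons //.
congr rcons; apply/eq_in_map => i; rewrite mem_iota add1n ltnS => /andP[_ ir].
by rewrite -cats1 takel_cat.
Qed.

Lemma last_prefix_walk (v : word) : last [::] (prefix_walk v) = v.
Proof. by case/lastP: v => [|r a] //; rewrite prefix_walk_rcons last_rcons. Qed.

Lemma size_prefix_walk (v : word) : size (prefix_walk v) = size v.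
Proof. by rewrite size_map size_iota. Qed.

Lemma mem_prefix_walk (v w : word) : (w \in prefix_walk v) = (w != [::]) && prefix w v.
Proof.
elim/last_ind: v => [|r a IH]; first by rewrite prefixs0 andNb.
rewrite prefix_walk_rcons mem_rcons inE IH prefix_rconsE andb_orr orbC.
by case: (eqVneq w (rcons r a)) => [->|_]; rewrite ?eqxx ?rcons_neq0 ?orbT ?andbF ?orbF.
Qed.

Lemma uniq_prefix_walk (v : word) : uniq (prefix_walk v).
Proof.
rewrite map_inj_in_uniq ?iota_uniq // => i j.
rewrite !mem_iota !add1n !ltnS => /andP[_ iv] /andP[_ jv] /(congr1 size).
by rewrite !size_takel.
Qed.

Lemma climbing_walkE E p : path (adj E) [::] p -> size (last [::] p) = size p ->
  p = prefix_walk (last [::] p).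
Proof.
elim/last_ind: p => [|p y IH] //; rewrite rcons_path last_rcons size_rcons.
case/andP=> pw zy ey; have := walk_size pw; have := adj_size zy; rewrite ey /= => yz zp.
have ez : size (last [::] p) = size p by apply/eqP; rewrite eqn_leq zp -ltnS.
have [l ->] := adj_parent zy (etrans ey (congr1 S (esym ez))).
by rewrite prefix_walk_rcons -IH.
Qed.

Lemma geodesicE (T : subgraph X) (g : word) p :
  walk T.2 g (prefix_walk g) -> geodesic T g p <-> p = prefix_walk g.
Proof.
move=> gw; split=> [[/andP[pw /eqP pg] pmin]|->]; last first.
  by split=> // p' /andP[/walk_size gp' /eqP pg]; rewrite size_prefix_walk -pg.
have := pmin _ gw; have := walk_size pw; rewrite size_prefix_walk pg /= => gp pg'.
by rewrite -pg; apply: climbing_walkE pw _; rewrite pg; apply/eqP; rewrite eqn_leq gp.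
Qed.

Lemma on_walk_rcons e p (v : word) :
  on_walk e (rcons p v) = on_walk e p || joins e (last [::] p) v.
Proof. by rewrite /on_walk zip_cons_rcons has_rcons orbC. Qed.

(** * Forests of reduced words *)

Definition children (u : word) : seq word :=
  [seq rcons u l | l <- enum {: letter X} & reduced (rcons u l)].

Lemma mem_children (u w : word) :
  (w \in children u) = [&& w != [::], reduced w & parent w == u].
Proof.
apply/mapP/idP => [[l]|].
  by rewrite mem_filter => /andP[wred _] ->; rewrite rcons_neq0 parent_rcons eqxx andbT.
case/lastP: w => [|r a] //; rewrite parent_rcons => /and3P[_ rared /eqP<-].
by exists a; rewrite // mem_filter rared mem_enum.
Qed.

Lemma uniq_children (u : word) : uniq (children u).
Proof.
rewrite map_inj_uniq; last exact: rcons_injr.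
by rewrite filter_uniq // enum_uniq.
Qed.

Lemma size_children_nil : size (children [::]) = #|{: letter X}|.
Proof. by rewrite size_map size_filter count_predT cardT. Qed.

Lemma size_children (u : word) :
  u != [::] -> reduced u -> size (children u) = #|{: letter X}|.-1.
Proof.
case/lastP: u => [|r a] // _ rared; rewrite size_map size_filter.
rewrite (eq_count (a2 := predC1 (a.1, ~~ a.2))) => [|[x b]]; last first.
  rewrite /= reduced_rcons2 rared /cancels /= xpair_eqE eq_sym.
  by case: (x == a.1); case: b; case: (a.2).
have := count_predC (pred1 (a.1, ~~ a.2)) (enum {: letter X}).
by rewrite count_uniq_mem ?enum_uniq // mem_enum -cardT add1n => <-.
Qed.

Definition forest_on (L : seq word) (F : {fset word}) :=
  {in F, forall w, [/\ w != [::], reduced w & (w \in L) || (parent w \in F)]}.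

Definition frontier (L : seq word) := [/\ uniq L,
  {in L, forall u, (u != [::]) && reduced u} & {in L &, forall u v, prefix u v -> u = v}].

(* Either the first slot u stays empty, or u becomes a vertex and its children new slots. *)
Fixpoint forests (k : nat) (L : seq word) : seq {fset word} :=
  if k is k'.+1 then
    (fix forests_k L := if L is u :: L' then
       forests_k L' ++ [seq u |` F | F <- forests k' (children u ++ L')] else [::]) L
  else [:: fset0].

Lemma forests_cons k u L : forests k.+1 (u :: L) =
  forests k.+1 L ++ [seq u |` F | F <- forests k (children u ++ L)].
Proof. by []. Qed.

Lemma forest_on_root L F w : forest_on L F -> w \in F -> exists2 v, v \in L & prefix v w.
Proof.
move=> FL; elim: {w}(size w).+1 {-2}w (ltnSn (size w)) => // n IH w wn wF.
have [nw _ /orP[wL|pF]] := FL w wF; first by exists w; rewrite ?prefix_refl.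
case/lastP: w nw wn wF pF => [|r a] // _; rewrite size_rcons parent_rcons => rn _ rF.
by have [v vL vr] := IH r rn rF; exists v; rewrite // prefix_rconsE vr.
Qed.

Lemma forest_on_notin L F u : forest_on L F -> {in L, forall v, ~~ prefix v u} -> u \notin F.
Proof. by move=> FL Lu; apply/negP => /(forest_on_root FL)[v /Lu/negP]. Qed.

Lemma forest_on_sub L L' F : {subset L <= L'} -> forest_on L F -> forest_on L' F.
Proof. by move=> LL' FL w /FL[nw wred /orP[/LL'->|->]]; split; rewrite ?orbT. Qed.

Section Frontier.
Variables (u : word) (L : seq word).
Hypothesis uL : frontier (u :: L).

Lemma frontier_behead : frontier L.
Proof.
case: uL => /andP[_ Luniq] Lred Lanti; split=> // [v vL|v w vL wL].
  by apply: Lred; rewrite inE vL orbT.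
by apply: Lanti; rewrite inE ?vL ?wL orbT.
Qed.

Lemma frontier_not_prefix v : v \in children u ++ L -> ~~ prefix v u.
Proof.
case: uL => /andP[uL' _] _ Lanti; rewrite mem_cat => /orP[|vL].
  by case/mapP=> l _ ->; apply/negP => /size_prefix; rewrite size_rcons ltnn.
apply/negP => vu; have := Lanti v u; rewrite inE vL orbT mem_head => /(_ isT isT vu) ev.
by rewrite -ev vL in uL'.
Qed.

Lemma frontier_children : frontier (children u ++ L).
Proof.
have [Luniq Lred Lanti] := frontier_behead.
have [/andP[uL' _] _ uLanti] := uL.
have uprefix v : v \in L -> prefix u v -> False.
  by move=> vL /uLanti; rewrite mem_head inE vL orbT => /(_ isT isT) uv; rewrite uv vL in uL'.
split.
- rewrite cat_uniq uniq_children Luniq andbT; apply/hasPn => v vL.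
  by apply/mapP=> -[l _ vE]; apply: (uprefix v vL); rewrite vE prefix_rcons.
- move=> v; rewrite mem_cat => /orP[|/Lred //].
  by rewrite mem_children => /and3P[-> ->].
move=> v w; rewrite !mem_cat => /orP[/mapP[l _ ->]|vL] /orP[/mapP[l' _ ->]|wL].
- by rewrite prefix_rconsE => /orP[/size_prefix|/eqP]; rewrite ?size_rcons ?ltnn.
- by move=> /(prefix_trans (prefix_rcons u l)) /(uprefix w wL).
- rewrite prefix_rconsE => /orP[vu|/eqP //].
  by have := frontier_not_prefix (v := v); rewrite mem_cat vL orbT vu => /(_ isT).
- exact: Lanti.
Qed.

End Frontier.

Lemma forests_complete L F : forest_on L F -> F \in forests #|` F| L.
Proof.
move: {2 3}#|` F| (erefl #|` F|) => k; elim: k L F => [|k IHk] L F.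
  by move=> /cardfs0_eq-> _; rewrite mem_seq1.
elim: L F => [|u L IHL] F cF FL.
  have /fset0Pn[w wF] : F != fset0 by rewrite -cardfs_gt0 cF.
  by have [] := forest_on_root FL wF.
rewrite forests_cons mem_cat; have [uF|uF] := boolP (u \in F); last first.
  apply/orP; left; apply: (IHL F cF) => w wF; have [nw wred] := FL w wF.
  by rewrite inE; case: eqVneq wF uF => [-> ->|].
apply/orP; right; apply/mapP; exists (F `\ u); last by rewrite fsetD1K.
apply: IHk; first by move: cF; rewrite (cardfsD1 u) uF => -[].
move=> w; rewrite in_fsetD1 => /andP[wu wF]; have [nw wred] := FL w wF.
rewrite inE (negPf wu) /= in_fsetD1 mem_cat mem_children nw wred /=.
by case: eqVneq => [|_] //=; rewrite orbT.
Qed.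

Lemma forests_sound k L F :
  frontier L -> F \in forests k L -> forest_on L F /\ #|` F| = k.
Proof.
elim: k L F => [|k IHk] L F; first by move=> _; rewrite inE => /eqP->.
elim: L F => [|u L IHL] F // uL.
rewrite forests_cons mem_cat => /orP[/(IHL _ (frontier_behead uL))[FL <-]|].
  by split=> //; apply: forest_on_sub FL => v vL; rewrite inE vL orbT.
case/mapP=> F' /(IHk _ _ (frontier_children uL))[F'L <-] ->.
have uF' : u \notin F' by apply: forest_on_notin F'L _ => v /(frontier_not_prefix uL).
split; last by rewrite cardfsU1 uF'.
move=> w; rewrite in_fset1U => /orP[/eqP->|wF'].
  by have [_ /(_ u (mem_head _ _)) /andP[-> ->] _] := uL; rewrite mem_head.
have [nw wred wroot] := F'L w wF'; split=> //; move: wroot.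
rewrite mem_cat inE in_fset1U => /orP[/orP[/mapP[l _ ->]|->]|->]; rewrite ?orbT //.
by rewrite parent_rcons eqxx orbT.
Qed.

Lemma mem_forests k L F :
  frontier L -> F \in forests k L <-> forest_on L F /\ #|` F| = k.
Proof.
by move=> fL; split=> [/(forests_sound fL)|[FL <-]] //; apply: forests_complete.
Qed.

Lemma uniq_forests k L : frontier L -> uniq (forests k L).
Proof.
elim: k L => [|k IHk] L //; elim: L => [|u L IHL] // uL.
have fL := frontier_behead uL; have fcL := frontier_children uL.
have notin_u F : forest_on (children u ++ L) F -> u \notin F.
  by move=> FL; apply: forest_on_notin FL _ => v /(frontier_not_prefix uL).
have Lsub : {subset L <= children u ++ L} by move=> v vL; rewrite mem_cat vL orbT.
rewrite forests_cons cat_uniq IHL // map_inj_in_uniq ?IHk ?andbT //.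
  apply/hasPn => _ /mapP[F _ ->]; apply/negP => /(mem_forests _ _ fL)[+ _].
  by move/(forest_on_sub Lsub)/notin_u; rewrite fset1U1.
move=> F G /(mem_forests _ _ fcL)[/notin_u uF _] /(mem_forests _ _ fcL)[/notin_u uG _] /= FG.
by rewrite -(fsetU1K uF) FG fsetU1K.
Qed.

Lemma size_forests k L : (0 < #|X|)%N -> frontier L -> (0 < size L) || (0 < k) ->
  ((size (forests k L))%:R = fuss_catalan #|{: letter X}|.-1 (size L) k :> rat)%R.
Proof.
move=> X0; have P0 : (0 < #|{: letter X}|.-1)%N by rewrite card_prod card_bool; lia.
elim: k L => [|k IHk] L fL; first by rewrite orbF => L0; rewrite fuss_catalan_k0.
elim: L fL => [|u L IHL] uL _; first by rewrite fuss_catalan_q0.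
have [_ /(_ u (mem_head _ _)) /andP[nu ured] _] := uL.
have fL := frontier_behead uL; have fcL := frontier_children uL.
have cL : size (children u ++ L) = (#|{: letter X}|.-1 + size L)%N.
  by rewrite size_cat size_children.
rewrite forests_cons size_cat size_map natrD IHL ?orbT //.
change (size (u :: L)) with (size L).+1; rewrite fuss_catalanS //; congr (_ + _)%R.
by rewrite -cL; apply: IHk; rewrite // cL addn_gt0 P0.
Qed.

Definition prefixes (g : word) := [::] :: prefix_walk g.

Lemma mem_prefixes (g w : word) : (w \in prefixes g) = prefix w g.
Proof. by rewrite inE mem_prefix_walk; case: eqVneq => [->|]; rewrite ?prefix0s. Qed.

Lemma uniq_prefixes (g : word) : uniq (prefixes g).
Proof. by rewrite /= uniq_prefix_walk mem_prefix_walk eqxx. Qed.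

Definition trunk (g : word) : {fset word} := [fset w in prefixes g].

Lemma mem_trunk (g w : word) : (w \in trunk g) = prefix w g.
Proof. by rewrite in_fset mem_prefixes. Qed.

Definition branch_roots (g : word) : seq word :=
  [seq c <- flatten [seq children u | u <- prefixes g] | ~~ prefix c g].

Lemma mem_flatten_children (g c : word) :
  (c \in flatten [seq children u | u <- prefixes g]) =
  [&& c != [::], reduced c & prefix (parent c) g].
Proof.
apply/flatten_mapP/idP => [[u]|/and3P[nc cred cg]].
  by rewrite mem_prefixes mem_children => ug /and3P[-> -> /eqP->].
by exists (parent c); rewrite ?mem_prefixes // mem_children nc cred eqxx.
Qed.

Lemma uniq_flatten_children (g : word) : uniq (flatten [seq children u | u <- prefixes g]).
Proof.
elim: (prefixes g) (uniq_prefixes g) => [|u s IH] //= /andP[us /IH {}IH].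
rewrite cat_uniq uniq_children IH andbT; apply/hasPn => c /flatten_mapP[v vs].
rewrite !mem_children => /and3P[_ _ /eqP cv].
by apply/negP => /and3P[_ _ /eqP cu]; rewrite -cu cv vs in us.
Qed.

Lemma mem_branch_roots (g c : word) : (c \in branch_roots g) =
  [&& c != [::], reduced c, prefix (parent c) g & ~~ prefix c g].
Proof. by rewrite mem_filter mem_flatten_children andbC -!andbA. Qed.

Lemma frontier_branch_roots (g : word) : frontier (branch_roots g).
Proof.
split; first by rewrite filter_uniq ?uniq_flatten_children.
  by move=> c; rewrite mem_branch_roots => /and4P[-> -> _ _].
move=> c d; rewrite !mem_branch_roots => /and4P[_ _ cg ncg] /and4P[nd _ dg _].
case/lastP: d nd dg => [|r a] // _; rewrite parent_rcons prefix_rconsE => rg /orP[cr|/eqP//].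
by rewrite (prefix_trans cr rg) in ncg.
Qed.

Lemma size_branch_roots (g : word) : reduced g ->
  (size (branch_roots g) + size g = #|{: letter X}| + size g * #|{: letter X}|.-1)%N.
Proof.
move=> gred.
have trunk_children :
    count (fun c => prefix c g) (flatten [seq children u | u <- prefixes g]) = size g.
  rewrite -size_filter -(size_prefix_walk g); apply/perm_size/uniq_perm.
  - by rewrite filter_uniq ?uniq_flatten_children.
  - exact: uniq_prefix_walk.
  move=> c; rewrite mem_filter mem_flatten_children mem_prefix_walk.
  apply/idP/idP => [/and4P[cg -> _ _] //|/andP[nc cg]].
  by rewrite cg nc (reduced_prefix cg gred) (prefix_trans (prefix_take _ _) cg).
have all_children :
    sumn [seq size (children u) | u <- prefix_walk g] = (size g * #|{: letter X}|.-1)%N.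
  elim/last_ind: g gred {trunk_children} => [|r a IH] // rared.
  rewrite prefix_walk_rcons map_rcons sumn_rcons IH ?(reduced_prefix (prefix_rcons r a)) //.
  by rewrite size_children ?rcons_neq0 // size_rcons mulSn addnC.
rewrite /branch_roots size_filter -{1}trunk_children [in LHS]addnC count_predC size_flatten.
by rewrite /shape -map_comp /= size_children_nil all_children.
Qed.

(** * Munn trees *)

Section TreeEdges.
Variable x0 : X.

(* The Cayley edge between parent w and w; x0 is a junk value for the empty word. *)
Definition tree_edge (w : word) : cedge X :=
  let a := last (x0, false) w in if a.2 then (w, a.1) else (parent w, a.1).

Lemma tree_edge_rcons (r : word) a :
  tree_edge (rcons r a) = if a.2 then (rcons r a, a.1) else (r, a.1).
Proof. by rewrite /tree_edge last_rcons parent_rcons. Qed.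

Lemma joins_tree_edge (r : word) a :
  reduced (rcons r a) -> joins (tree_edge (rcons r a)) r (rcons r a).
Proof.
case: a => x [] red; rewrite tree_edge_rcons /joins /mulx /=.
  by rewrite rmul_rcons /cancels /= !eqxx orbT.
case/lastP: r red => [|r c] red; first by rewrite /= !eqxx.
rewrite rmul_rcons.
by move: red; rewrite reduced_rcons2 => /andP[_ /negPf->]; rewrite !eqxx.
Qed.

Lemma joins_tree_edgeE e (r : word) a :
  joins e r (rcons r a) -> e = tree_edge (rcons r a).
Proof.
have rcons2_neq c : r <> rcons (rcons r a) c.
  by move/(congr1 size); rewrite !size_rcons; lia.
case: e => h x; rewrite /joins /mulx tree_edge_rcons /=.
case/orP=> /andP[/eqP<- /eqP Ea].
  case: (rmulP r (x, false)) Ea => [-> /rcons_inj[->] //|[c Er] Ea].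
  by exfalso; apply: (rcons2_neq c); rewrite Ea -Er.
move: Ea; rewrite rmul_rcons; case: ifP => [|_ /rcons2_neq //].
by case: a rcons2_neq => y b _ /andP[/eqP-> /=]; case: b.
Qed.

Lemma tree_edge_inj (w w' : word) : w != [::] -> w' != [::] ->
  reduced w -> reduced w' -> tree_edge w = tree_edge w' -> w = w'.
Proof.
case/lastP: w => [|r [x b]] // _; case/lastP: w' => [|r' [x' b']] // _.
rewrite !tree_edge_rcons /=.
case: b; case: b' => red red' /= [Er Ex]; first by [].
- by move: red'; rewrite -Er reduced_rcons2 /cancels /= Ex !eqxx andbF.
- by move: red; rewrite Er reduced_rcons2 /cancels /= Ex !eqxx andbF.
- by rewrite Er Ex.
Qed.

Definition tree_edges (V : {fset word}) : {fset cedge X} :=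
  [fset tree_edge w | w in V & w != [::]].

Definition tree_of (V : {fset word}) : subgraph X := (V, tree_edges V).

Definition parent_closed (V : {fset word}) := {in V, forall w, parent w \in V}.

Lemma tree_edgesP (V : {fset word}) e :
  reflect (exists2 w, (w \in V) && (w != [::]) & e = tree_edge w) (e \in tree_edges V).
Proof.
apply: (iffP idP) => [/imfsetP[w Hw ->]|[w Hw ->]]; first by exists w.
by apply/imfsetP; exists w.
Qed.

Lemma joinsC e (u v : word) : joins e u v = joins e v u.
Proof. by rewrite /joins orbC. Qed.

Lemma joins_endpoint e (u v : word) : joins e u v -> u \in [:: e.1; mulx e.1 e.2].
Proof. by case/orP=> [/andP[/eqP-> _]|/andP[_ /eqP->]]; rewrite !inE eqxx ?orbT. Qed.

Section ConnectedSubgraph.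
Variable T : subgraph X.
Hypothesis T_conn : is_fin_conn_subgraph T.

(* A walk from 1 to v enters the words extending v, which it can only do along the edge
   from parent v to v. *)
Lemma conn_parent_edge v :
  v \in T.1 -> v != [::] -> parent v \in T.1 /\ tree_edge v \in T.2.
Proof.
case: T_conn => _ T_edges _ T_walk vT nv.
have [p /andP[pw /eqP pv]] := T_walk v vT.
have [u [w [uw nvu vw]]] : exists u w, [/\ adj T.2 u w, ~~ prefix v u & prefix v w].
  by apply: (path_crossing pw); rewrite ?prefixs0 // pv prefix_refl.
have [wv [l vE]] := adj_enter_prefix uw nvu vw; rewrite wv vE in uw; rewrite vE.
case/hasP: uw => e eT J; rewrite parent_rcons -(joins_tree_edgeE J).
split=> //; have /andP[e1 e2] := T_edges e eT.
by move: (joins_endpoint J); rewrite !inE => /orP[] /eqP->.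
Qed.

Lemma conn_parent_closed : parent_closed T.1.
Proof.
move=> w wT; have [w0|nw] := eqVneq w [::]; first by rewrite w0 in wT *.
by case: (conn_parent_edge wT nw).
Qed.

Lemma conn_tree_of : T = tree_of T.1.
Proof.
case: T T_conn conn_parent_edge => V E [_ E_ends _ _] parent_edge.
congr pair; apply/fsetP => -[h x].
apply/idP/tree_edgesP => [eE|[w /andP[wV nw] ->]]; last first.
  by case: (parent_edge w wV nw).
have /andP[hV mV] := E_ends _ eE; rewrite /= in hV mV.
have J : joins (h, x) h (mulx h x) by rewrite /joins !eqxx.
(* The edge (h, x) leads either up from h to m = h x or down from h to its parent m. *)
set m := mulx h x in mV J; case: (rmulP h (x, false)) => [mE|[l hE]].
  rewrite -/(mulx h x) -/m in mE; rewrite mE in mV J.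
  by exists (rcons h (x, false)); [rewrite /= mV rcons_neq0 | apply: joins_tree_edgeE J].
rewrite -/(mulx h x) -/m in hE; rewrite joinsC {2}hE in J.
by exists h; [rewrite /= hV hE rcons_neq0 | rewrite {2}hE; apply: joins_tree_edgeE J].
Qed.

End ConnectedSubgraph.

Lemma on_walk_prefix_walk e (v : word) : reduced v ->
  on_walk e (prefix_walk v) <-> exists w, [/\ prefix w v, w != [::] & e = tree_edge w].
Proof.
elim/last_ind: v => [|r a IH] rv.
  by split=> // -[w []]; rewrite prefixs0 => /eqP->.
have {}IH := IH (reduced_prefix (prefix_rcons r a) rv).
rewrite prefix_walk_rcons on_walk_rcons last_prefix_walk; split.
  case/orP=> [/IH[w [wr nw ->]]|/joins_tree_edgeE->].
    by exists w; rewrite prefix_rconsE wr.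
  by exists (rcons r a); rewrite prefix_refl rcons_neq0.
case=> w [+ nw eE]; rewrite eE in IH *; rewrite prefix_rconsE => /orP[wr|/eqP->].
  by apply/orP; left; apply/IH; exists w.
by apply/orP; right; apply: joins_tree_edge.
Qed.

Definition off_trunk (V : {fset word}) (g : word) := [fset w in V | ~~ prefix w g].

Lemma mem_off_trunk V g w : (w \in off_trunk V g) = (w \in V) && ~~ prefix w g.
Proof. by rewrite !inE. Qed.

Section ParentClosedSet.
Variable V : {fset word}.
Hypotheses (V_reduced : {in V, forall w, reduced w}) (V_closed : parent_closed V).

Lemma closed_prefix v w : v \in V -> prefix w v -> w \in V.
Proof.
elim/last_ind: v w => [|r a IH] w vV; first by rewrite prefixs0 => /eqP->.
rewrite prefix_rconsE => /orP[|/eqP-> //]; apply: IH.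
by have := V_closed vV; rewrite parent_rcons.
Qed.

Lemma walk_tree_of v : v \in V -> walk (tree_edges V) v (prefix_walk v).
Proof.
rewrite /walk last_prefix_walk eqxx andbT.
elim/last_ind: v => [|r a IH] // raV.
have rV : r \in V by have := V_closed raV; rewrite parent_rcons.
rewrite prefix_walk_rcons rcons_path IH // last_prefix_walk.
apply/hasP; exists (tree_edge (rcons r a)); last exact/joins_tree_edge/V_reduced.
by apply/tree_edgesP; exists (rcons r a); rewrite ?raV ?rcons_neq0.
Qed.

Lemma tree_of_conn : [::] \in V -> is_fin_conn_subgraph (tree_of V).
Proof.
move=> rootV; split=> //= [e /tree_edgesP[w /andP[wV nw] ->]|v vV]; last first.
  by exists (prefix_walk v); apply: walk_tree_of.
case/lastP: w wV nw => [|r a] // raV _.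
have rV : r \in V by have := V_closed raV; rewrite parent_rcons.
by case/orP: (joins_tree_edge (V_reduced raV)) => /andP[/eqP<- /eqP<-]; rewrite rV raV.
Qed.

Variable g : word.
Hypothesis gV : g \in V.

Lemma trunk_edgeP e :
  trunk_edge (tree_of V) g e <-> exists w, [/\ prefix w g, w != [::] & e = tree_edge w].
Proof.
have geoE p := @geodesicE (tree_of V) g p (walk_tree_of gV).
have onE := on_walk_prefix_walk e (V_reduced gV).
split=> [[p [/geoE-> /onE]] //|/onE eg].
by exists (prefix_walk g); split=> //; apply/geoE.
Qed.

Lemma n_branch_edges_tree_of k : n_branch_edges (tree_of V) g k <-> #|` off_trunk V g| = k.
Proof.
have off_red w : w \in off_trunk V g -> reduced w /\ w != [::].
  rewrite mem_off_trunk => /andP[/V_reduced wred wg]; split=> //.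
  by apply: contraNneq wg => ->; rewrite prefix0s.
have branchE e :
    e \in tree_edge @` off_trunk V g <-> e \in tree_edges V /\ ~ trunk_edge (tree_of V) g e.
  split=> [/imfsetP[w /= wO ->]|[/tree_edgesP[w /andP[wV nw] ->] ntrunk]].
    have [wred nw] := off_red w wO; move: wO; rewrite mem_off_trunk => /andP[wV wg].
    split; first by apply/tree_edgesP; exists w; rewrite ?wV.
    case/trunk_edgeP=> w' [w'g nw' eE].
    have ww' := tree_edge_inj nw nw' wred (reduced_prefix w'g (V_reduced gV)) eE.
    by rewrite ww' w'g in wg.
  apply/imfsetP; exists w => //; rewrite mem_off_trunk wV; apply/negP => wg.
  by apply: ntrunk; apply/trunk_edgeP; exists w.
have cardE : #|` tree_edge @` off_trunk V g| = #|` off_trunk V g|.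
  apply/eqP/card_in_imfsetP => w w' /off_red[wred nw] /off_red[w'red nw'].
  exact: tree_edge_inj.
split=> [[B [<- BE]]|<-]; last by exists (tree_edge @` off_trunk V g).
rewrite -cardE; congr (#|` _|); apply/fsetP => e.
by apply/idP/idP => [/branchE/BE|/BE/branchE].
Qed.

End ParentClosedSet.

Section TrunkAndForest.
Variables (g : word) (F : {fset word}).
Hypotheses (g_red : reduced g) (F_forest : forest_on (branch_roots g) F).

Lemma trunk_forest_reduced : {in trunk g `|` F, forall w, reduced w}.
Proof.
move=> w; rewrite in_fsetU mem_trunk => /orP[/reduced_prefix->//|/F_forest[]//].
Qed.

Lemma trunk_forest_closed : parent_closed (trunk g `|` F).
Proof.
move=> w; rewrite !in_fsetU !mem_trunk => /orP[wg|/F_forest[_ _]].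
  by rewrite (prefix_trans (prefix_take _ _) wg).
by rewrite mem_branch_roots => /orP[/and4P[_ _ -> _]|->]; rewrite ?orbT.
Qed.

Lemma off_trunk_forest : off_trunk (trunk g `|` F) g = F.
Proof.
apply/fsetP => w; rewrite mem_off_trunk in_fsetU mem_trunk.
have [wF|_] := boolP (w \in F); last by case: (prefix w g).
rewrite orbT /=; apply/negP => wg; have [v] := forest_on_root F_forest wF.
by rewrite mem_branch_roots => /and4P[_ _ _ /negP vg] /prefix_trans/(_ wg).
Qed.

End TrunkAndForest.

Lemma munn_forestP T g k : reduced g ->
  munn_elt T g /\ n_branch_edges T g k <->
  exists2 F, forest_on (branch_roots g) F /\ #|` F| = k & T = tree_of (trunk g `|` F).
Proof.
move=> gred; split=> [[[Tconn gT] Tk]|[F [FL <-] ->]]; last first.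
  have Vred := trunk_forest_reduced gred FL; have Vclosed := trunk_forest_closed FL.
  have gV : g \in trunk g `|` F by rewrite in_fsetU mem_trunk prefix_refl.
  split; first by split=> //; apply: tree_of_conn; rewrite // in_fsetU mem_trunk prefix0s.
  by apply/n_branch_edges_tree_of; rewrite ?off_trunk_forest.
have Tred : {in T.1, forall w, reduced w} by case: Tconn.
have Tclosed := conn_parent_closed Tconn.
rewrite (conn_tree_of Tconn) in Tk *.
exists (off_trunk T.1 g); last first.
  congr tree_of; apply/fsetP => w; rewrite in_fsetU mem_trunk mem_off_trunk.
  by case: (boolP (prefix w g)) => [/(closed_prefix Tclosed gT)->|]; rewrite ?andbT.
split; last exact/(n_branch_edges_tree_of Tred Tclosed gT).
move=> w; rewrite mem_off_trunk => /andP[wT wg].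
have nw : w != [::] by apply: contraNneq wg => ->; rewrite prefix0s.
rewrite nw Tred // mem_branch_roots mem_off_trunk nw Tred // Tclosed //= wg andbT.
by case: (prefix (parent w) g).
Qed.

Lemma trunk_forest_inj g F F' :
  forest_on (branch_roots g) F -> forest_on (branch_roots g) F' ->
  tree_of (trunk g `|` F) = tree_of (trunk g `|` F') -> F = F'.
Proof.
move=> FL F'L [V_eq _].
by rewrite -(off_trunk_forest FL) V_eq off_trunk_forest.
Qed.

End TreeEdges.
End Words.

Theorem mainTheorem3 (X : finType) (X_nonempty : 0 < #|X|)
  (t k : nat) (g : seq (letter X)) (g_red : reduced g) (g_len : size g = t)
  (p q : nat) (hp : p = (2 * #|X|).-1)
  (hq : (q%:Z = 2%:Z * p%:Z + (t%:Z - 1) * (p%:Z - 1))%R) :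
  exists s : seq (subgraph X),
    uniq s /\
    (forall T : subgraph X, T \in s <-> (munn_elt T g /\ n_branch_edges T g k)) /\
    ((size s)%:R = fuss_catalan p q k)%R.
Proof.
have [x0 _] : exists x0 : X, x0 \in X by apply/card_gt0P.
have fr := frontier_branch_roots g.
have mem_forestsE F := mem_forests k F fr.
exists [seq tree_of x0 (trunk g `|` F) | F <- forests k (branch_roots g)]; split; [|split].
- rewrite map_inj_in_uniq ?uniq_forests // => F F' /mem_forestsE[FL _] /mem_forestsE[F'L _].
  exact: trunk_forest_inj.
- move=> T; rewrite munn_forestP //.
  by split=> [/mapP[F /mem_forestsE FL ->]|[F /mem_forestsE FL ->]]; [exists F | exact: map_f].
have := size_branch_roots g_red; rewrite card_prod card_bool g_len => nroots.
have q_roots : size (branch_roots g) = q by nia.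
rewrite size_map size_forests //; last by apply/orP; left; nia.
by rewrite q_roots hp card_prod card_bool mulnC.
Qed.
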